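(* Let $\lambda>0$, $\mu\in(0,\tfrac15]$ (the paper writes $\mu=\iota^3$) and $A>0$. Set $$\gamma_1:=\frac12\min\Big\{\frac{8\lambda}{5(3+800\lambda)},\ \frac1{1500},\ \frac{1}{27(13\lambda+12)(10\lambda+\mu+9)^2}\Big\},\qquad \gamma_2:=\max\{8\lambda+1+\gamma_1,\ 4\lambda+6+\gamma_1\}.$$ Let $Z_0,\dots,Z_7\in\mathbb{R}$ with $\sum_{\ell=0}^7|Z_\ell|<\gamma_1$, and let $\mathfrak B=\frac1A M$ where $$M=\begin{pmatrix}4\lambda+Z_1 & Z_2 & \frac{2(3-8\mu)}{15}-4\lambda+Z_3 & Z_4 & 0\\ 0 & \frac{25}{36}+Z_0 & 0&0&0\\ -\frac{2(3-8\mu)}{15}-4\lambda & 0 & 4\lambda+\frac{2(3-8\mu)}{15} & 0 & 0\\ 0 & \frac{2(1-\mu)}{3} & -\frac{2(1-\mu)}{5}+Z_5 & 4\lambda+4+Z_6 & 2\mu\\ 0&0& -\frac{(3\mu+2)^2}{6(10\lambda+\mu+9)} & \frac43+Z_7 & \frac{(3\mu+2)^2}{2(10\lambda+\mu+9)}\end{pmatrix}.$$ Then for every nonzero $\eta\in\mathbb{R}^5$, $$\frac{\gamma_1}{A}\,\eta^T\eta<\eta^T\mathfrak B\eta<\frac{\gamma_2}{A}\,\eta^T\eta .$$ *)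

From mathcomp Require Import all_boot all_order all_algebra.
Set Implicit Arguments. Unset Strict Implicit. Unset Printing Implicit Defensive.
Import Order.TTheory GRing.Theory Num.Theory.
Local Open Scope ring_scope.

Definition gamma1 (R : realFieldType) (lam mu : R) : R :=
  2^-1 * Num.min (8 * lam / (5 * (3 + 800 * lam)))
          (Num.min (1500^-1)
             ((27 * (13 * lam + 12) * (10 * lam + mu + 9) ^+ 2)^-1)).

Definition gamma2 (R : realFieldType) (lam mu : R) : R :=
  Num.max (8 * lam + 1 + gamma1 lam mu) (4 * lam + 6 + gamma1 lam mu).

Definition Mmat (R : realFieldType) (lam mu Z0 Z1 Z2 Z3 Z4 Z5 Z6 Z7 : R)
  : 'M[R]_5 :=
  let c := 2 * (3 - 8 * mu) / 15 in
  let d := 10 * lam + mu + 9 in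
  let e := (3 * mu + 2) ^+ 2 in
  \matrix_(i < 5, j < 5)
   nth (0 : R) (nth [::] [:: [:: 4 * lam + Z1; Z2; c - 4 * lam + Z3; Z4; 0];
       [:: 0; 25 / 36 + Z0; 0; 0; 0];
       [:: - c - 4 * lam; 0; 4 * lam + c; 0; 0];
       [:: 0; 2 * (1 - mu) / 3; - (2 * (1 - mu) / 5) + Z5; 4 * lam + 4 + Z6; 2 * mu];
       [:: 0; 0; - (e / (6 * d)); 4 / 3 + Z7; e / (2 * d)] ] i) j.

Definition qform (R : ringType) (n : nat) (B : 'M[R]_n) (eta : 'cV[R]_n) : R :=
  ((eta^T *m B *m eta) 0 0).

From mathcomp Require Import all_boot all_order all_algebra.
From mathcomp Require Import reals.
From mathcomp Require Import ring lra.
Set Implicit Arguments. Unset Strict Implicit. Unset Printing Implicit Defensive.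
Import Order.TTheory GRing.Theory Num.Theory.
Local Open Scope ring_scope.

(* Writing x0..x4 for the coordinates of eta and N = x0^2 + ... + x4^2, the
   form eta^T M eta splits as  principal_form + perturbation_form, where the
   principal part collects the Z-free entries (with eps = (3mu+2)^2/(6d) and
   d = 10 lam + mu + 9) and the perturbation part is linear in Z0..Z7.
   - Every monomial Z_l x_i x_j is bounded by |Z_l| N, so the perturbation
     part lies in [-sZ N, sZ N] with sZ = sum |Z_l| < gamma1.
   - The principal part is at least 2 gamma1 N and at most
     max(8 lam + 1, 4 lam + 6) N: both bounds come from splitting it into
     2x2 blocks, each nonnegative by the discriminant criterion
     quad2_nonneg, plus diagonal remainders whose signs follow from the
     three quantities in the min defining gamma1.
   Adding the two estimates gives gamma1 N < eta^T M eta < gamma2 N, and the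
   theorem follows by expanding the matrix product and dividing by A > 0. *)

Lemma quad2_nonneg (R : realFieldType) (P g Q x y : R) :
  0 < P -> g ^+ 2 <= 4 * P * Q -> 0 <= P * x ^+ 2 + g * x * y + Q * y ^+ 2.
Proof.
move=> hP hdisc.
have sos : 4 * P * (P * x ^+ 2 + g * x * y + Q * y ^+ 2) =
           (2 * P * x + g * y) ^+ 2 + (4 * P * Q - g ^+ 2) * y ^+ 2 by ring.
have : 0 <= 4 * P * (P * x ^+ 2 + g * x * y + Q * y ^+ 2).
  rewrite sos addr_ge0 ?sqr_ge0 // mulr_ge0 ?sqr_ge0 //; lra.
by rewrite pmulr_rge0 //; lra.
Qed.

Lemma monomial_bound (R : realFieldType) (z u v N : R) :
  u ^+ 2 <= N -> v ^+ 2 <= N -> - (`|z| * N) <= z * u * v <= `|z| * N.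
Proof.
move=> hu hv; rewrite -ler_norml -mulrA normrM ler_wpM2l //.
by rewrite ler_norml; apply/andP; split; nra.
Qed.

Definition perturbation_form (R : realFieldType)
    (Z0 Z1 Z2 Z3 Z4 Z5 Z6 Z7 x0 x1 x2 x3 x4 : R) : R :=
  Z1 * x0 * x0 + Z2 * x0 * x1 + Z3 * x0 * x2 + Z4 * x0 * x3 + Z0 * x1 * x1
  + Z5 * x3 * x2 + Z6 * x3 * x3 + Z7 * x4 * x3.

Lemma perturbation_form_bound (R : realFieldType)
    (Z0 Z1 Z2 Z3 Z4 Z5 Z6 Z7 x0 x1 x2 x3 x4 : R)
    (N := x0 ^+ 2 + x1 ^+ 2 + x2 ^+ 2 + x3 ^+ 2 + x4 ^+ 2) :
  `|perturbation_form Z0 Z1 Z2 Z3 Z4 Z5 Z6 Z7 x0 x1 x2 x3 x4|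
    <= (`|Z0| + `|Z1| + `|Z2| + `|Z3| + `|Z4| + `|Z5| + `|Z6| + `|Z7|) * N.
Proof.
have s0 := sqr_ge0 x0; have s1 := sqr_ge0 x1; have s2 := sqr_ge0 x2.
have s3 := sqr_ge0 x3; have s4 := sqr_ge0 x4.
have u0 : x0 ^+ 2 <= N by rewrite /N; lra.
have u1 : x1 ^+ 2 <= N by rewrite /N; lra.
have u2 : x2 ^+ 2 <= N by rewrite /N; lra.
have u3 : x3 ^+ 2 <= N by rewrite /N; lra.
have u4 : x4 ^+ 2 <= N by rewrite /N; lra.
have /andP[l1 r1] := monomial_bound Z1 u0 u0.
have /andP[l2 r2] := monomial_bound Z2 u0 u1.
have /andP[l3 r3] := monomial_bound Z3 u0 u2.
have /andP[l4 r4] := monomial_bound Z4 u0 u3.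
have /andP[l0 r0] := monomial_bound Z0 u1 u1.
have /andP[l5 r5] := monomial_bound Z5 u3 u2.
have /andP[l6 r6] := monomial_bound Z6 u3 u3.
have /andP[l7 r7] := monomial_bound Z7 u4 u3.
rewrite ler_norml /perturbation_form; apply/andP; split; lra.
Qed.

(* The Z-free part of eta^T M eta; eps is the coupling constant
   (3 mu + 2)^2 / (6 (10 lam + mu + 9)) of the last row of M. *)
Definition principal_form (R : realFieldType) (lam mu eps x0 x1 x2 x3 x4 : R) : R :=
  4 * lam * x0 ^+ 2 - 8 * lam * x0 * x2 + (4 * lam + 2 * (3 - 8 * mu) / 15) * x2 ^+ 2
  + 25 / 36 * x1 ^+ 2 + 2 * (1 - mu) / 3 * x1 * x3 - 2 * (1 - mu) / 5 * x2 * x3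
  + (4 * lam + 4) * x3 ^+ 2 + (2 * mu + 4 / 3) * x3 * x4 - eps * x2 * x4
  + 3 * eps * x4 ^+ 2.

(* Elementary facts on eps for mu in (0, 1/5]; the last identity expresses
   the squared (x3, x4) cross coefficient through eps. *)
Lemma coupling_bounds (R : realFieldType) (lam mu d eps : R) :
  0 < lam -> 0 < mu -> mu <= 5^-1 -> d = 10 * lam + mu + 9 ->
  6 * d * eps = (3 * mu + 2) ^+ 2 ->
  [/\ 0 < eps, 54 * eps <= 169 / 25, 2 <= 3 * d * eps &
      (2 * mu + 4 / 3) ^+ 2 = 8 / 3 * (d * eps)].
Proof.
move=> hlam hmu0 hmu1 hd heps.
have hd9 : 9 <= d by lra.
have e_lo : 4 <= (3 * mu + 2) ^+ 2 by nra.
have e_hi : (3 * mu + 2) ^+ 2 <= 169 / 25 by nra.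
have heps_lo : 2 <= 3 * d * eps by lra.
split=> //.
- nra.
- nra.
- have -> : (2 * mu + 4 / 3) ^+ 2 = 4 / 9 * (3 * mu + 2) ^+ 2 by field.
  by rewrite -heps; field.
Qed.

(* The (x3, x4) block left over in the lower bound is nonnegative; this is
   where the third entry of the min defining gamma1 is needed. *)
Lemma x3x4_block_nonneg (R : realFieldType) (lam mu d eps m x3 x4 : R) :
  0 < lam -> 0 < mu -> mu <= 5^-1 -> d = 10 * lam + mu + 9 ->
  6 * d * eps = (3 * mu + 2) ^+ 2 -> 0 <= m ->
  m * (27 * (13 * lam + 12) * d ^+ 2) <= 1 ->
  0 <= (4 * lam + 14 / 5) * x3 ^+ 2 + (2 * mu + 4 / 3) * x3 * x4
       + (9 / 4 * eps - m) * x4 ^+ 2.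
Proof.
move=> hlam hmu0 hmu1 hd heps hm0 hm.
have [dl_gt0 _ dl_lo g_eq] := coupling_bounds hlam hmu0 hmu1 hd heps.
apply: quad2_nonneg; first lra.
(* The threshold on m, with d >= 9, makes m negligible against eps >= 2/(3d). *)
have md_ge0 : 0 <= m * d by apply: mulr_ge0; lra.
have md_small : m * d * (13 * lam + 12) <= 1 / 243.
  have : 0 <= m * d * (13 * lam + 12) by apply: mulr_ge0; lra.
  nra.
have md_P : m * d * (4 * lam + 14 / 5) <= m * d * (13 * lam + 12) by nra.
have m_eps : 4 * (4 * lam + 14 / 5) * m <= eps * (28 * lam + 2) / 3.
  have : 3 * (4 * (4 * lam + 14 / 5) * m) * d <= d * eps * (28 * lam + 2) by nra.
  nra.
rewrite g_eq; nra.
Qed.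

Lemma principal_form_lower (R : realFieldType) (lam mu d eps m x0 x1 x2 x3 x4 : R) :
  0 < lam -> 0 < mu -> mu <= 5^-1 -> d = 10 * lam + mu + 9 ->
  6 * d * eps = (3 * mu + 2) ^+ 2 -> 0 <= m -> 15 * m <= 8 * lam ->
  1500 * m <= 1 -> m * (27 * (13 * lam + 12) * d ^+ 2) <= 1 ->
  m * (x0 ^+ 2 + x1 ^+ 2 + x2 ^+ 2 + x3 ^+ 2 + x4 ^+ 2)
    <= principal_form lam mu eps x0 x1 x2 x3 x4.
Proof.
move=> hlam hmu0 hmu1 hd heps hm0 hm1 hm2 hm3.
have [dl_gt0 dl_hi _ _] := coupling_bounds hlam hmu0 hmu1 hd heps.
have blk13 : 0 <= 1 / 3 * x1 ^+ 2 + 2 * (1 - mu) / 3 * x1 * x3 + 1 / 3 * x3 ^+ 2.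
  by apply: quad2_nonneg; nra.
have blk23 : 0 <= 1 / 20 * x2 ^+ 2 + - (2 * (1 - mu) / 5) * x2 * x3 + 4 / 5 * x3 ^+ 2.
  by apply: quad2_nonneg; nra.
have blk24 : 0 <= eps / 3 * x2 ^+ 2 + - eps * x2 * x4 + 3 / 4 * eps * x4 ^+ 2.
  by apply: quad2_nonneg; nra.
have blk34 := x3x4_block_nonneg x3 x4 hlam hmu0 hmu1 hd heps hm0 hm3.
have diag02 : 0 <= (4 * lam - 2 * m) * (x0 - x2) ^+ 2 by rewrite mulr_ge0 ?sqr_ge0 //; lra.
have diag2 : 0 <= (2 * (3 - 8 * mu) / 15 - 1 / 20 - eps / 3 - 3 * m) * x2 ^+ 2.
  by rewrite mulr_ge0 ?sqr_ge0 //; lra.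
have diag1 : 0 <= (13 / 36 - m) * x1 ^+ 2 by rewrite mulr_ge0 ?sqr_ge0 //; lra.
have diag3 : 0 <= (1 / 15 - m) * x3 ^+ 2 by rewrite mulr_ge0 ?sqr_ge0 //; lra.
have diag0 : 0 <= m * (x0 - 2 * x2) ^+ 2 by rewrite mulr_ge0 ?sqr_ge0.
rewrite /principal_form; lra.
Qed.

Lemma principal_form_upper (R : realFieldType) (lam mu d eps K x0 x1 x2 x3 x4 : R) :
  0 < lam -> 0 < mu -> mu <= 5^-1 -> d = 10 * lam + mu + 9 ->
  6 * d * eps = (3 * mu + 2) ^+ 2 -> 8 * lam + 1 <= K -> 4 * lam + 6 <= K ->
  principal_form lam mu eps x0 x1 x2 x3 x4
    <= K * (x0 ^+ 2 + x1 ^+ 2 + x2 ^+ 2 + x3 ^+ 2 + x4 ^+ 2).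
Proof.
move=> hlam hmu0 hmu1 hd heps hK1 hK2.
have [dl_gt0 dl_hi _ _] := coupling_bounds hlam hmu0 hmu1 hd heps.
have blk02 : 0 <= 4 * lam * x0 ^+ 2 + 8 * lam * x0 * x2 + 4 * lam * x2 ^+ 2.
  by apply: quad2_nonneg; nra.
have blk13 : 0 <= 1 / 3 * x1 ^+ 2 + - (2 * (1 - mu) / 3) * x1 * x3 + 1 / 3 * x3 ^+ 2.
  by apply: quad2_nonneg; nra.
have blk23 : 0 <= 1 / 5 * x2 ^+ 2 + 2 * (1 - mu) / 5 * x2 * x3 + 1 / 5 * x3 ^+ 2.
  by apply: quad2_nonneg; nra.
have blk24 : 0 <= eps / 2 * x2 ^+ 2 + eps * x2 * x4 + eps / 2 * x4 ^+ 2.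
  by apply: quad2_nonneg; nra.
have blk34 : 0 <= 13 / 15 * x3 ^+ 2 + - (2 * mu + 4 / 3) * x3 * x4 + 13 / 15 * x4 ^+ 2.
  by apply: quad2_nonneg; nra.
have s0 := sqr_ge0 x0; have s1 := sqr_ge0 x1; have s2 := sqr_ge0 x2.
have s3 := sqr_ge0 x3; have s4 := sqr_ge0 x4.
have dom0 : 8 * lam * x0 ^+ 2 <= K * x0 ^+ 2 by apply: ler_wpM2r; lra.
have dom1 : 2 * x1 ^+ 2 <= K * x1 ^+ 2 by apply: ler_wpM2r; lra.
have dom2 : (8 * lam + 1) * x2 ^+ 2 <= K * x2 ^+ 2 by apply: ler_wpM2r; lra.
have dom3 : (4 * lam + 6) * x3 ^+ 2 <= K * x3 ^+ 2 by apply: ler_wpM2r; lra.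
have dom4 : 6 * x4 ^+ 2 <= K * x4 ^+ 2 by apply: ler_wpM2r; lra.
have eps2 : eps * x2 ^+ 2 <= 1 / 7 * x2 ^+ 2 by apply: ler_wpM2r; lra.
have eps4 : eps * x4 ^+ 2 <= 1 / 7 * x4 ^+ 2 by apply: ler_wpM2r; lra.
have mu2 : 0 <= mu * x2 ^+ 2 by apply: mulr_ge0; lra.
rewrite /principal_form; lra.
Qed.

Lemma twice_gamma1 (R : realFieldType) (lam mu : R) :
  2 * gamma1 lam mu = Num.min (8 * lam / (5 * (3 + 800 * lam)))
    (Num.min (1500^-1) ((27 * (13 * lam + 12) * (10 * lam + mu + 9) ^+ 2)^-1)).
Proof. by rewrite /gamma1 mulrA divff ?mul1r // pnatr_eq0. Qed.

Lemma gamma1_gt0 (R : realFieldType) (lam mu : R) :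
  0 < lam -> 0 < mu -> 0 < gamma1 lam mu.
Proof.
move=> hlam hmu.
have : 0 < 2 * gamma1 lam mu.
  rewrite twice_gamma1 !lt_min !invr_gt0 ltr0n.
  by rewrite divr_gt0 ?mulr_gt0 ?exprn_gt0 //; lra.
lra.
Qed.

Lemma gamma1_bounds (R : realFieldType) (lam mu : R) (m := 2 * gamma1 lam mu) :
  0 < lam -> 0 < mu ->
  [/\ 15 * m <= 8 * lam, 1500 * m <= 1 &
      m * (27 * (13 * lam + 12) * (10 * lam + mu + 9) ^+ 2) <= 1].
Proof.
move=> hlam hmu.
have pos1 : 0 < 5 * (3 + 800 * lam) by lra.
have pos3 : 0 < 27 * (13 * lam + 12) * (10 * lam + mu + 9) ^+ 2.
  by rewrite !mulr_gt0 ?exprn_gt0 //; lra.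
have m1 : m <= 8 * lam / (5 * (3 + 800 * lam)) by rewrite /m twice_gamma1 ge_min lexx.
have m2 : m <= 1500^-1 by rewrite /m twice_gamma1 !ge_min lexx orbT.
have m3 : m <= (27 * (13 * lam + 12) * (10 * lam + mu + 9) ^+ 2)^-1.
  by rewrite /m twice_gamma1 !ge_min lexx !orbT.
split.
- rewrite ler_pdivlMr // in m1; nra.
- by rewrite mulrC -ler_pdivlMr ?div1r.
- by rewrite -ler_pdivlMr // div1r.
Qed.

Lemma gamma2E (R : realFieldType) (lam mu : R) :
  gamma2 lam mu = Num.max (8 * lam + 1) (4 * lam + 6) + gamma1 lam mu.
Proof. by rewrite /gamma2 addr_maxl. Qed.

Lemma perturbed_form_bounds (R : realFieldType)
    (lam mu Z0 Z1 Z2 Z3 Z4 Z5 Z6 Z7 x0 x1 x2 x3 x4 : R)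
    (N := x0 ^+ 2 + x1 ^+ 2 + x2 ^+ 2 + x3 ^+ 2 + x4 ^+ 2)
    (F := principal_form lam mu ((3 * mu + 2) ^+ 2 / (6 * (10 * lam + mu + 9)))
            x0 x1 x2 x3 x4
          + perturbation_form Z0 Z1 Z2 Z3 Z4 Z5 Z6 Z7 x0 x1 x2 x3 x4) :
  0 < lam -> 0 < mu -> mu <= 5^-1 ->
  `|Z0| + `|Z1| + `|Z2| + `|Z3| + `|Z4| + `|Z5| + `|Z6| + `|Z7| < gamma1 lam mu ->
  0 < N -> gamma1 lam mu * N < F /\ F < gamma2 lam mu * N.
Proof.
move=> hlam hmu0 hmu1 hZ hN.
have hd : 10 * lam + mu + 9 != 0 by rewrite gt_eqF //; lra.
have heps : 6 * (10 * lam + mu + 9) * ((3 * mu + 2) ^+ 2 / (6 * (10 * lam + mu + 9)))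
           = (3 * mu + 2) ^+ 2 by field.
have hg1 := gamma1_gt0 hlam hmu0.
have [thr1 thr2 thr3] := gamma1_bounds hlam hmu0.
have m_ge0 : 0 <= 2 * gamma1 lam mu by lra.
have lower := principal_form_lower x0 x1 x2 x3 x4 hlam hmu0 hmu1 erefl heps
  m_ge0 thr1 thr2 thr3.
have K1 : 8 * lam + 1 <= Num.max (8 * lam + 1) (4 * lam + 6) by rewrite le_max lexx.
have K2 : 4 * lam + 6 <= Num.max (8 * lam + 1) (4 * lam + 6).
  by rewrite le_max lexx orbT.
have upper := principal_form_upper x0 x1 x2 x3 x4 hlam hmu0 hmu1 erefl heps K1 K2.
have /= := perturbation_form_bound Z0 Z1 Z2 Z3 Z4 Z5 Z6 Z7 x0 x1 x2 x3 x4.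
rewrite ler_norml => /andP[pert_lo pert_hi].
have hsmall := hZ; rewrite -(ltr_pM2r hN) in hsmall.
rewrite /F /N gamma2E in hsmall *; split; lra.
Qed.

Lemma qformZ (R : comNzRingType) (n : nat) (a : R) (B : 'M[R]_n) (eta : 'cV[R]_n) :
  qform (a *: B) eta = a * qform B eta.
Proof. by rewrite /qform -scalemxAr -scalemxAl mxE. Qed.

Lemma sqnorm_gt0 (R : realDomainType) (n : nat) (eta : 'cV[R]_n) :
  eta != 0 -> 0 < (eta^T *m eta) 0 0.
Proof.
have sq_ge0 (i : 'I_n) : 0 <= eta^T 0 i * eta i 0 by rewrite mxE -expr2 sqr_ge0.
move=> nz; rewrite mxE lt_def sumr_ge0 ?andbT //.
apply: contra nz => /eqP sum0; apply/eqP/matrixP => i j.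
have := psumr_eq0P (fun i _ => sq_ge0 i) sum0 (i := i) isT.
by rewrite (ord1 j) !mxE => /eqP; rewrite mulf_eq0 orbb => /eqP.
Qed.

Lemma qform_Mmat_coords (R : realFieldType) (lam mu Z0 Z1 Z2 Z3 Z4 Z5 Z6 Z7 : R)
    (eta : 'cV[R]_5) :
  10 * lam + mu + 9 != 0 ->
  exists x0 x1 x2 x3 x4 : R,
    (eta^T *m eta) 0 0 = x0 ^+ 2 + x1 ^+ 2 + x2 ^+ 2 + x3 ^+ 2 + x4 ^+ 2 /\
    qform (Mmat lam mu Z0 Z1 Z2 Z3 Z4 Z5 Z6 Z7) eta =
      principal_form lam mu ((3 * mu + 2) ^+ 2 / (6 * (10 * lam + mu + 9)))
        x0 x1 x2 x3 x4
      + perturbation_form Z0 Z1 Z2 Z3 Z4 Z5 Z6 Z7 x0 x1 x2 x3 x4.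
Proof.
move=> d_neq0.
exists (eta ord0 0), (eta (lift ord0 ord0) 0),
  (eta (lift ord0 (lift ord0 ord0)) 0),
  (eta (lift ord0 (lift ord0 (lift ord0 ord0))) 0),
  (eta (lift ord0 (lift ord0 (lift ord0 (lift ord0 ord0)))) 0).
rewrite /qform /Mmat /principal_form /perturbation_form !mxE.
rewrite !big_ord_recl !big_ord0 !mxE /=.
rewrite !big_ord_recl !big_ord0 !mxE /=.
by split; field.
Qed.

Theorem lemmat (R : realType) (lam mu A Z0 Z1 Z2 Z3 Z4 Z5 Z6 Z7 : R)
  (hlam : 0 < lam) (hmu0 : 0 < mu) (hmu1 : mu <= 5^-1) (hA : 0 < A)
  (hZ : `|Z0| + `|Z1| + `|Z2| + `|Z3| + `|Z4| + `|Z5| + `|Z6| + `|Z7|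
          < gamma1 lam mu)
  (eta : 'cV[R]_5) (heta : eta != 0) :
  let B := A^-1 *: Mmat lam mu Z0 Z1 Z2 Z3 Z4 Z5 Z6 Z7 in
  gamma1 lam mu / A * (eta^T *m eta) 0 0 < qform B eta /\
  qform B eta < gamma2 lam mu / A * (eta^T *m eta) 0 0.
Proof.
move=> B.
have hd : 10 * lam + mu + 9 != 0 by rewrite gt_eqF //; lra.
have [x0 [x1 [x2 [x3 [x4 [EN EQ]]]]]] :=
  qform_Mmat_coords Z0 Z1 Z2 Z3 Z4 Z5 Z6 Z7 eta hd.
have hN : 0 < x0 ^+ 2 + x1 ^+ 2 + x2 ^+ 2 + x3 ^+ 2 + x4 ^+ 2 by rewrite -EN sqnorm_gt0.
have /= [lo hi] := @perturbed_form_bounds R lam mu Z0 Z1 Z2 Z3 Z4 Z5 Z6 Z7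
  x0 x1 x2 x3 x4 hlam hmu0 hmu1 hZ hN.
rewrite /B qformZ EQ EN ![_ / A * _]mulrAC [A^-1 * _]mulrC.
by rewrite !ltr_pM2r ?invr_gt0.
Qed.
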